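(* Let $\mathcal{C}_0$ be a linear code of length $\ell$ over $\mathbb{F}_q$, let $R\subseteq[1,\ell]$ with $|R|=r$, and let $\overline{\mathcal{C}_0}$ be the code obtained by puncturing $\mathcal{C}_0$ on the positions in $R$ (deleting those coordinates). Let $X=\mathbb{F}_q\times[1,\ell]$ and $\overline{X}=\mathbb{F}_q\times([1,\ell]\setminus R)$. Then for every prime power $q'$, $$\mathrm{IC}_{q'}(\overline{\mathcal{C}_0})=\{\bar c\in\mathbb{F}_{q'}^{\overline{X}}:\ \mathrm{ext}(\bar c)\in\mathrm{IC}_{q'}(\mathcal{C}_0)\},$$ where $\mathrm{ext}(\bar c)\in\mathbb{F}_{q'}^X$ agrees with $\bar c$ on $\overline{X}$ and is $0$ on $X\setminus\overline{X}$; i.e. $\mathrm{IC}_{q'}(\overline{\mathcal{C}_0})$ is the shortening of $\mathrm{IC}_{q'}(\mathcal{C}_0)$ on $X\setminus\overline X$, which is the union of the $r$ groups $\mathbb{F}_q\times\{i\}$, $i\in R$.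
   Context: For a code $\mathcal{C}_0\subseteq S^{I}$ over a finite set $S$ with coordinates indexed by a finite set $I$, its incidence code over $\mathbb{F}_{q'}$ is $\mathrm{IC}_{q'}(\mathcal{C}_0)=\{u\in\mathbb{F}_{q'}^{S\times I}:\ \sum_{i\in I}u_{(c_i,i)}=0\ \text{for all } c\in\mathcal{C}_0\}$ (the code whose parity checks are the incidence vectors of the blocks $\{(c_i,i):i\in I\}$, $c\in\mathcal{C}_0$). *)

From HB Require Import structures.
From mathcomp Require Import all_boot all_order all_algebra all_field.
Set Implicit Arguments. Unset Strict Implicit. Unset Printing Implicit Defensive.
Import GRing.Theory.
Local Open Scope ring_scope.

Definition IC (F' : finFieldType) (S I : finType) (C : {set {ffun I -> S}})
  : {set {ffun S * I -> F'}} :=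
  [set u : {ffun S * I -> F'} | [forall c in C, \sum_(i : I) u (c i, i) == 0]].

Notation Ibar R := {i | i \notin R}.

Definition punct (S I : finType) (R : {set I}) (C : {set {ffun I -> S}})
  : {set {ffun Ibar R -> S}} :=
  [set [ffun j : Ibar R => c (val j)] | c : {ffun I -> S} in C].

Definition ext (F' : finFieldType) (S I : finType) (R : {set I})
  (cb : {ffun S * Ibar R -> F'}) : {ffun S * I -> F'} :=
  [ffun x : S * I => (if (insub x.2 : option (Ibar R)) is Some j
                       then cb (x.1, j) else 0) : F'].

(* The set of codewords of a linear code C0 <= F^l (a subspace of row vectors),
   viewed as words {ffun 'I_l -> F}. *)
Definition words (F : finFieldType) (l : nat) (C0 : {vspace 'rV[F]_l})
  : {set {ffun 'I_l -> F}} :=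
  [set [ffun i => c ord0 i] | c : 'rV[F]_l in [pred c | c \in C0]].

From HB Require Import structures.
From mathcomp Require Import all_boot all_order all_algebra all_field.
Import GRing.Theory.
Local Open Scope ring_scope.

(* Since ext cb vanishes on the deleted coordinates, the parity check of a
   word c evaluated at ext cb equals the parity check of the punctured word
   evaluated at cb; the blocks of the punctured code are exactly the punctured
   blocks. *)

Section Puncturing.

Variables (F' : finFieldType) (S I : finType) (R : {set I}).

Lemma sum_ext (cb : {ffun S * Ibar R -> F'}) (c : {ffun I -> S}) :
  \sum_(i : I) ext cb (c i, i) = \sum_(j : Ibar R) cb (c (val j), j).
Proof.
rewrite (bigID (fun i => i \notin R)) /= [X in _ + X]big1 ?addr0; last first.
  by move=> i; rewrite negbK => iR; rewrite /ext ffunE /= insubF ?iR.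
rewrite (reindex_omap (val : Ibar R -> I) insub); last first.
  by move=> i iR; rewrite insubT.
apply: eq_big => [j|j _]; first by rewrite valK (valP j) eqxx.
by rewrite /ext ffunE /= valK.
Qed.

Lemma IC_punct (C : {set {ffun I -> S}}) :
  IC F' (punct R C) = [set cb : {ffun S * Ibar R -> F'} | ext cb \in IC F' C].
Proof.
apply/setP => cb; rewrite !inE; apply/forall_inP/forall_inP => checks c cC.
  rewrite sum_ext; have := checks _ (imset_f (fun c : {ffun I -> S} =>
    [ffun j : Ibar R => c (val j)]) cC).
  by under eq_bigr do rewrite ffunE.
case/imsetP: cC => {}c cC ->; have := checks c cC; rewrite sum_ext.
by under [X in X == 0 -> _]eq_bigr do
  rewrite -[c (val _)](ffunE (fun j : Ibar R => c (val j))).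
Qed.

End Puncturing.

Theorem mainTheorem12 (F : finFieldType) (l : nat)
  (C0 : {vspace 'rV[F]_l}) (R : {set 'I_l}) (F' : finFieldType) :
  IC F' (punct R (words C0)) =
  [set cb : {ffun F * Ibar R -> F'} | ext cb \in IC F' (words C0)].
Proof. exact: IC_punct. Qed.
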